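(* Let $A\in\mathbb{R}_{\max}^{n\times n}$ with $\lambda(A)=0$, let $g=g(\mathrm{crit}(A))$, assume $T_1(A)=\mathrm{DM}(g,n)$ and that $\mathrm{crit}(A)$ contains, up to choice of first node, a unique cycle $Z_0$ of length $g$. Let $i$ be a node of $Z_0$ and $j$ a node not in $Z_0$. Then in any interesting walk: (i) between any two consecutive occurrences of $i$ there is exactly one occurrence of $j$; (ii) there is exactly one occurrence of $j$ before the first occurrence of $i$ and exactly one occurrence of $j$ after the last occurrence of $i$.
   Context: Max-plus semiring $\mathbb{R}_{\max}=\mathbb{R}\cup\{-\infty\}$ with $a\oplus b=\max(a,b)$, $a\otimes b=a+b$; $(AB)_{ij}=\max_k(a_{ik}+b_{kj})$; $A^t$ is the $t$-th max-plus power, $A^0=I$. $\mathcal{D}(A)$ is the digraph on $\{1,\dots,n\}$ with arc $(i,j)$ of weight $a_{ij}$ whenever $a_{ij}\ne-\infty$. A walk is a node sequence whose consecutive pairs are arcs, its length is its number of arcs and its weight the sum of its arc weights; cycles are closed walks with no proper closed subwalk. $\lambda(A)$ is the maximal cycle mean. $\mathrm{crit}(A)$ is the subgraph of all nodes and arcs of cycles attaining $\lambda(A)$; its nodes are critical. $g(\mathrm{crit}(A))$ is the maximum over strongly connected components of $\mathrm{crit}(A)$ of their minimal cycle length. The cyclicity of $\mathrm{crit}(A)$ is the lcm over components of the gcd of their cycle lengths. CSR terms: with $\gamma$ the cyclicity of $\mathrm{crit}(A)$ and $\lambda(A)=0$, $M=I\oplus N\oplus\dots\oplus N^{n-1}$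 where $N=A^\gamma$: $c_{ij}=m_{ij}$ if $j$ critical, else $-\infty$; $r_{ij}=m_{ij}$ if $i$ critical, else $-\infty$; $s_{ij}=a_{ij}$ if $(i,j)$ is an arc of $\mathrm{crit}(A)$, else $-\infty$; $CS^tR[A]$ is the product $CS^tR$. $B_N$ has $(B_N)_{ij}=-\infty$ if $i$ or $j$ is critical and $a_{ij}$ otherwise. $T_1(A)$ is the least $T\ge0$ with $A^t=CS^tR[A]\oplus B_N^t$ for all $t\ge T$. $\mathrm{DM}(g,n)=g(n-2)+n$. Twice optimal / interesting walks: a walk $W$ from $i$ to $j$ passing through at least one node of $Z_0$ is twice optimal if it has maximal weight among all walks from $i$ to $j$ passing through a node of $Z_0$ whose length is congruent to the length of $W$ modulo $g$, and has minimal length among all such walks of maximal weight. It is interesting if it is twice optimal and has length $\mathrm{DM}(g,n)+g-1$. *)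

(* Max-plus matrices over an arbitrary real field R
   (the paper's R is the instance R = real numbers); -oo is None. *)
From HB Require Import structures.
From mathcomp Require Import all_boot all_order all_algebra.
From Stdlib Require Import ClassicalEpsilon.
Set Implicit Arguments. Unset Strict Implicit. Unset Printing Implicit Defensive.
Import Order.TTheory GRing.Theory Num.Theory.

Definition asbool (P : Prop) : bool :=
  if excluded_middle_informative P then true else false.

Section MaxPlus.
Variable R : realFieldType.

Definition mp := option R.  (* None = -oo *)
Definition mp_add (x y : mp) : mp :=
  match x, y with
  | None, _ => y
  | _, None => x
  | Some a, Some b => Some (Num.max a b)
  end.
Definition mp_mul (x y : mp) : mp :=
  match x, y with
  | Some a, Some b => Some (a + b)%R
  | _, _ => None
  end.

Variable n : nat.
Definition mxmp := 'I_n -> 'I_n -> mp.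
Definition mp_id : mxmp := fun i j => if i == j then Some 0%R else None.
Definition mp_prod (A B : mxmp) : mxmp :=
  fun i j => \big[mp_add/None]_(k < n) mp_mul (A i k) (B k j).
Definition mp_plus (A B : mxmp) : mxmp := fun i j => mp_add (A i j) (B i j).
Fixpoint mp_pow (A : mxmp) (t : nat) : mxmp :=
  match t with 0 => mp_id | t'.+1 => mp_prod (mp_pow A t') A end.

Variable A : mxmp.

Definition arc (i j : 'I_n) : bool := A i j != None.

(* walks are nonempty node sequences; length = number of arcs *)
Definition arcs (w : seq 'I_n) := zip w (behead w).
Definition is_walk (w : seq 'I_n) : Prop :=
  w <> [::] /\ forall e, e \in arcs w -> arc e.1 e.2.
Definition wlen (w : seq 'I_n) : nat := (size w).-1.
Definition wweight (w : seq 'I_n) : R :=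
  (\sum_(e <- arcs w) odflt 0 (A e.1 e.2))%R.
Definition walk_from_to (w : seq 'I_n) (u v : 'I_n) : Prop :=
  is_walk w /\ onth w 0 = Some u /\ onth w (wlen w) = Some v.

(* cycles: closed walks (length >= 1) with no proper closed subwalk *)
Definition is_cycle (w : seq 'I_n) : Prop :=
  is_walk w /\ (0 < wlen w)%N /\ onth w 0 = onth w (wlen w) /\
  forall a b : nat, (a < b <= wlen w)%N -> (a, b) <> (0%N, wlen w) ->
    onth w a <> onth w b.
Definition cmean (c : seq 'I_n) : R := (wweight c / (wlen c)%:R)%R.

Definition max_cycle_mean (l : R) : Prop :=
  (exists c, is_cycle c /\ cmean c = l) /\
  (forall c, is_cycle c -> (cmean c <= l)%R).

Definition crit_cycle (c : seq 'I_n) : Prop :=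
  is_cycle c /\ forall c', is_cycle c' -> (cmean c' <= cmean c)%R.
Definition crit_node (k : 'I_n) : Prop := exists c, crit_cycle c /\ k \in c.
Definition crit_arc (k l : 'I_n) : Prop :=
  exists c, crit_cycle c /\ (k, l) \in arcs c.
Definition crit_walk (w : seq 'I_n) : Prop :=
  w <> [::] /\ (forall x, x \in w -> crit_node x) /\
  forall e, e \in arcs w -> crit_arc e.1 e.2.
Definition crit_graph_cycle (c : seq 'I_n) : Prop :=
  is_cycle c /\ crit_walk c.
Definition same_scc (k l : 'I_n) : Prop :=
  crit_node k /\ crit_node l /\
  (exists w, crit_walk w /\ onth w 0 = Some k /\ onth w (wlen w) = Some l) /\
  (exists w, crit_walk w /\ onth w 0 = Some l /\ onth w (wlen w) = Some k).
Definition comp_cycle_len (k : 'I_n) (m : nat) : Prop :=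
  exists c, crit_graph_cycle c /\ wlen c = m /\ forall x, x \in c -> same_scc k x.
Definition comp_min_cycle_len (k : 'I_n) (m : nat) : Prop :=
  comp_cycle_len k m /\ forall m', comp_cycle_len k m' -> (m <= m')%N.
(* g = g(crit(A)) : max over components of the minimal cycle length *)
Definition crit_girth (g : nat) : Prop :=
  (exists k, crit_node k /\ comp_min_cycle_len k g) /\
  (forall k m, crit_node k -> comp_min_cycle_len k m -> (m <= g)%N).
Definition comp_gcd (k : 'I_n) (d : nat) : Prop :=
  (forall m, comp_cycle_len k m -> (d %| m)%N) /\
  (forall d', (forall m, comp_cycle_len k m -> (d' %| m)%N) -> (d' %| d)%N).
(* gamma = cyclicity of crit(A) : lcm over components of these gcds *)
Definition crit_cyclicity (gamma : nat) : Prop :=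
  (forall k d, crit_node k -> comp_gcd k d -> (d %| gamma)%N) /\
  (forall G, (forall k d, crit_node k -> comp_gcd k d -> (d %| G)%N) ->
     (gamma %| G)%N).

Definition csr_M (gamma : nat) : mxmp :=
  fun i j => \big[mp_add/None]_(k < n) mp_pow (mp_pow A gamma) k i j.
Definition csr_C (gamma : nat) : mxmp :=
  fun i j => if asbool (crit_node j) then csr_M gamma i j else None.
Definition csr_R (gamma : nat) : mxmp :=
  fun i j => if asbool (crit_node i) then csr_M gamma i j else None.
Definition csr_S : mxmp :=
  fun i j => if asbool (crit_arc i j) then A i j else None.
Definition B_N : mxmp :=
  fun i j => if asbool (crit_node i) || asbool (crit_node j) then None else A i j.
Definition CStR (gamma t : nat) : mxmp :=
  mp_prod (mp_prod (csr_C gamma) (mp_pow csr_S t)) (csr_R gamma).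
Definition csr_holds (gamma t : nat) : Prop :=
  forall i j, mp_pow A t i j = mp_plus (CStR gamma t) (mp_pow B_N t) i j.
Definition T1_is (T : nat) : Prop :=
  exists gamma, crit_cyclicity gamma /\
    (forall t, (T <= t)%N -> csr_holds gamma t) /\
    (forall T', (forall t, (T' <= t)%N -> csr_holds gamma t) -> (T <= T')%N).

Definition unique_crit_cycle (g : nat) (Z0 : seq 'I_n) : Prop :=
  crit_graph_cycle Z0 /\ wlen Z0 = g /\
  forall c, crit_graph_cycle c -> wlen c = g ->
    exists k, behead c = rot k (behead Z0).

Definition through (Z0 w : seq 'I_n) : bool := has (fun x => x \in Z0) w.
Definition twice_optimal (Z0 : seq 'I_n) (g : nat) (W : seq 'I_n) : Prop :=
  exists u v, walk_from_to W u v /\ through Z0 W /\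
  (forall V, walk_from_to V u v -> through Z0 V ->
     wlen V = wlen W %[mod g] -> (wweight V <= wweight W)%R) /\
  (forall V, walk_from_to V u v -> through Z0 V ->
     wlen V = wlen W %[mod g] -> wweight V = wweight W -> (wlen W <= wlen V)%N).

End MaxPlus.

Definition DM (g n : nat) : nat := g * (n - 2) + n.

Definition interesting (R : realFieldType) (n : nat) (A : mxmp R n)
  (Z0 : seq 'I_n) (g : nat) (W : seq 'I_n) : Prop :=
  twice_optimal A Z0 g W /\ wlen W = (DM g n + g - 1)%N.

From HB Require Import structures.
From mathcomp Require Import all_boot all_order all_algebra.
From mathcomp Require Import zify lra.
Set Implicit Arguments. Unset Strict Implicit. Unset Printing Implicit Defensive.
Import Order.TTheory GRing.Theory Num.Theory.

(* Since lambda(A) = 0, closed walks have nonpositive weight, so cutting closed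
   subwalks out of a walk keeps its endpoints and does not decrease its weight.
   As W is twice optimal, one cannot cut out a nonempty family of closed
   subwalks of total length divisible by g while keeping a node of Z0, and by
   pigeonhole on prefix sums any g closed subwalks contain such a family.
   Splitting W into the loops that return to a node y shows that y occurs at
   most g times if y lies on Z0, and at most g + 1 times otherwise.  These
   bounds add up to n (g + 1) - g, the number of nodes of an interesting walk,
   so all of them are attained: i occurs g times and j occurs g + 1 times.
   No i lies outside the g loops of j, and no such loop contains two i's (the
   closed subwalk between them would be one more removable piece), so each
   contains exactly one: i and j alternate, beginning and ending with j. *)

Lemma onth_nth_size {T : Type} (x0 : T) s k :
  k < size s -> onth s k = Some (nth x0 s k).
Proof. by move=> ks; rewrite onthE (nth_map x0). Qed.

Lemma split_first {T : eqType} (y : T) s :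
  y \in s -> exists s1 s2, s = s1 ++ y :: s2 /\ y \notin s1.
Proof.
move=> ys; exists (take (index y s) s), (drop (index y s).+1 s); split.
  by rewrite -[LHS](cat_take_drop (index y s)) (drop_nth y) ?index_mem ?nth_index.
by rewrite in_take // ltnn.
Qed.

Lemma not_uniq_split {T : eqType} (s : seq T) :
  ~~ uniq s -> exists s1 y s2 s3, s = s1 ++ y :: s2 ++ y :: s3.
Proof.
elim: s => [//|x s IH] /=; rewrite negb_and negbK => /orP [/splitPr [s2 s3]|].
  by exists [::], x, s2, s3.
by case/IH => s1 [y [s2 [s3 ->]]]; exists (x :: s1), y, s2, s3.
Qed.

Lemma count_take_index {T : eqType} (x : T) (s : seq T) : count_mem x (take (index x s) s) = 0.
Proof. by apply/count_memPn; rewrite in_take_leq ?index_size // ltnn. Qed.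

Lemma count_take_nth {T : eqType} (x0 x : T) (s : seq T) t : t < size s ->
  count_mem x (take t.+1 s) = count_mem x (take t s) + (nth x0 s t == x).
Proof. by move=> ts; rewrite (take_nth x0 ts) -cats1 count_cat /= addn0. Qed.

Lemma mask_set_nth {T : Type} (x0 : T) (m : bitseq) s t v :
  t < size s -> ~~ nth false m t -> mask m (set_nth x0 s t v) = mask m s.
Proof.
elim: s m t => [//|x s IH] [|b m] [|t] //= ts mt; first by rewrite (negbTE mt).
by rewrite IH.
Qed.

Lemma mem_flatten_mask {T : eqType} (m : bitseq) (ss : seq (seq T)) t z :
  nth false m t -> z \in nth [::] ss t -> z \in flatten (mask m ss).
Proof.
elim: ss m t => [|s ss IH] [|b m] [|t] //=; first by move=> -> zs; rewrite mem_cat zs.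
by move=> mt /(IH _ _ mt); case: b => //=; rewrite mem_cat orbC => ->.
Qed.

Lemma sumn_shape_mask_negb {T : Type} (m : bitseq) (ss : seq (seq T)) : size m = size ss ->
  sumn (shape (mask m ss)) + sumn (shape (mask (map negb m) ss)) = sumn (shape ss).
Proof.
elim: ss m => [|s ss IH] [|b m] //= [sm].
by case: b; rewrite /= -(IH m sm); lia.
Qed.

Lemma count_mem_gt1_split {T : eqType} (x : T) s :
  1 < count_mem x s -> exists a b c, s = a ++ x :: b ++ x :: c.
Proof.
move=> c2; have /split_first [a [s' [Es xa]]] : x \in s by rewrite -has_pred1 has_count ltnW.
have /split_first [b [c [Es' _]]] : x \in s'.
  by move: c2; rewrite Es count_cat (count_memPn xa) /= eqxx -has_pred1 has_count.
by exists a, b, c; rewrite Es Es'.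
Qed.

Lemma size_cut_loop {T : Type} (a : seq T) x l b :
  size (a ++ x :: l ++ x :: b) = size (a ++ x :: b) + (size l).+1.
Proof. by rewrite !size_cat /= size_cat /=; lia. Qed.

Lemma leqif_sumn_size (c : seq nat) :
  {in c, forall x, x <= 1} -> sumn c <= size c ?= iff all (eq_op^~ 1) c.
Proof.
elim: c => [_|x c IH le1] /=; first exact/leqif_refl.
rewrite -add1n; apply: leqif_add; first by apply/leqif_eq/le1; rewrite inE eqxx.
by apply: IH => z zc; apply: le1; rewrite inE zc orbT.
Qed.

Section ReturnLoops.
Variables (T : eqType) (y : T).

Definition return_loop (s : seq T) := (last y s == y) && (count_mem y s == 1).

Lemma return_loopP s : reflect (exists2 l, s = rcons l y & y \notin l) (return_loop s).
Proof.
apply: (iffP andP) => [[/eqP sy /eqP c1]|[l -> yl]]; last first.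
  by rewrite last_rcons -cats1 count_cat /= (count_memPn yl) eqxx.
case/lastP: s sy c1 => [//|l z]; rewrite last_rcons => -> c1; exists l => //.
by apply/count_memPn; move: c1; rewrite -cats1 count_cat /= eqxx addn1 => -[].
Qed.

Lemma return_decomposition W : y \in W ->
  exists pre segs post, [/\ W = pre ++ y :: flatten segs ++ post,
    y \notin pre, y \notin post & all return_loop segs].
Proof.
case/split_first=> pre [rest [-> ypre]]; exists pre.
suff [segs [post [-> ypost loops]]] : exists segs post,
    [/\ rest = flatten segs ++ post, y \notin post & all return_loop segs].
  by exists segs, post.
elim: {rest}(size rest).+1 {-2}rest (ltnSn (size rest)) => [//|k IH] rest restk.
have [/split_first [l [r [Er yl]]]|yrest] := boolP (y \in rest); last by exists [::], rest.
have [|segs [post [Er' ypost loops]]] := IH r; first by move: restk; rewrite Er size_cat /=; lia.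
exists (rcons l y :: segs), post; split => //=; first by rewrite Er Er' cat_rcons -catA.
by rewrite loops andbT; apply/return_loopP; exists l.
Qed.

Lemma count_return_decomposition pre segs post :
  y \notin pre -> y \notin post -> all return_loop segs ->
  count_mem y (pre ++ y :: flatten segs ++ post) = (size segs).+1.
Proof.
move=> ypre ypost loops; rewrite count_cat (count_memPn ypre) /= eqxx count_cat.
rewrite (count_memPn ypost) addn0 add1n; congr S.
by elim: segs loops => [//|s segs IH] /= /andP [/andP [_ /eqP c1] /IH]; rewrite count_cat c1 => ->.
Qed.

Lemma sumn_mask_shape_gt0 segs (m : bitseq) : all return_loop segs ->
  size m = size segs -> has id m -> 0 < sumn (mask m (shape segs)).
Proof.
elim: segs m => [|s segs IH] [|b m] //= /andP [/andP [_ /eqP c1] loops] [sm].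
case: b => /= [_|/(IH m loops sm) //]; rewrite -add1n leq_add // lt0n size_eq0.
by apply: contra_eq_neq c1 => ->.
Qed.

End ReturnLoops.

(* The occurrences of a and b alternate, starting with a; other letters are ignored. *)
Definition alternate {T : eqType} (a b : T) (s : seq T) := forall t,
  count_mem b (take t s) <= count_mem a (take t s) <= (count_mem b (take t s)).+1.

Section Alternation.
Variables (T : eqType) (a b : T).
Hypothesis ab : a != b.

Lemma alternate_flatten segs :
  all (fun s => return_loop a s && (count_mem b s == 1)) segs ->
  alternate b a (flatten segs) /\ count_mem b (flatten segs) = count_mem a (flatten segs).
Proof.
elim: segs => [|s segs IH] /=; first by split=> // t; rewrite take_nil.
case/andP=> /andP [/return_loopP [l -> al] /eqP cb] /IH [alt cnt].
have ca : count_mem a (rcons l a) = 1 by rewrite -cats1 count_cat (count_memPn al) /= eqxx.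
split; last by rewrite !count_cat cnt cb ca.
move=> t; rewrite take_cat size_rcons; case: ltnP => tl.
  have atl : a \notin take t l by apply: contra al; apply: mem_take.
  rewrite -cats1 takel_cat // (count_memPn atl) /=.
  by rewrite -cb -cats1 count_cat -{2}(cat_take_drop t l) count_cat -addnA leq_addr.
by rewrite !count_cat ca cb; have := alt (t - (size l).+1); lia.
Qed.

Lemma alternate_return_decomposition pre segs post :
  a \notin pre -> b \notin pre -> a \notin post -> b \notin post ->
  all (fun s => return_loop a s && (count_mem b s == 1)) segs ->
  alternate a b (pre ++ a :: flatten segs ++ post).
Proof.
move=> apre bpre apost bpost /alternate_flatten [alt cnt] t.
rewrite take_cat; case: ltnP => tpre.
  by rewrite !(count_memPn (contra (@mem_take _ _ _ _) _)).
rewrite !count_cat (count_memPn apre) (count_memPn bpre) !add0n.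
case: (t - size pre) => [//|k] /=; rewrite eqxx (negbTE ab) take_cat.
case: ltnP => kF; first by have := alt k; lia.
by rewrite !count_cat !(count_memPn (contra (@mem_take _ _ _ _) _)) // cnt; lia.
Qed.

Variables (s : seq T) (x0 : T).
Hypothesis alt : alternate a b s.

Lemma alternate_between p q : p < q < size s -> nth x0 s p = b -> nth x0 s q = b ->
  (forall r, p < r < q -> nth x0 s r != b) -> count_mem a (drop p.+1 (take q s)) = 1.
Proof.
move=> /andP [pq qs] sp sq between; have ps := ltn_trans pq qs.
have Etake : take q s = take p.+1 s ++ drop p.+1 (take q s).
  by rewrite -{1}(cat_take_drop p.+1 (take q s)) take_takel.
have no_b : count_mem b (drop p.+1 (take q s)) = 0.
  apply/count_memPn/negP => /(nthP x0) [k]; rewrite size_drop size_take qs => kq.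
  rewrite nth_drop nth_take; last by lia.
  by apply/eqP; apply: between; lia.
set D := drop p.+1 (take q s) in Etake no_b *.
have := alt p; have := alt p.+1; have := alt q; have := alt q.+1.
rewrite !(count_take_nth x0 _ qs) sq Etake !count_cat no_b !(count_take_nth x0 _ ps) sp.
by rewrite eqxx eq_sym (negbTE ab) /=; lia.
Qed.

Lemma alternate_before_first : b \in s -> count_mem a (take (index b s) s) = 1.
Proof.
move=> bs; have is_ := index_mem b s; rewrite bs in is_.
have := alt (index b s); have := alt (index b s).+1.
rewrite !(count_take_nth b _ is_) nth_index // eqxx eq_sym (negbTE ab) !count_take_index; lia.
Qed.

Lemma alternate_after_last : b \in s -> count_mem a s = (count_mem b s).+1 ->
  count_mem a (take (index b (rev s)) (rev s)) = 1.
Proof.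
move=> bs cnt; set k := index b (rev s).
have ks : k < size s by rewrite -size_rev index_mem mem_rev.
set m := size s - k.+1; have ms : m < size s by rewrite /m; lia.
have sm : nth b s m = b by rewrite /m -nth_rev // nth_index // mem_rev.
have Es : s = take m.+1 s ++ drop (size s - k) s.
  by rewrite -[LHS](cat_take_drop m.+1) /m; congr (_ ++ drop _ _); lia.
have tail_b : count_mem b (drop (size s - k) s) = 0.
  by rewrite -count_rev -take_rev count_take_index.
rewrite take_rev count_rev.
move: cnt; rewrite {1 2}Es !count_cat tail_b.
have := alt m; have := alt m.+1; rewrite !(count_take_nth b _ ms) sm eqxx eq_sym (negbTE ab); lia.
Qed.

End Alternation.

Section Walks.
Variables (R : realFieldType) (n : nat) (A : mxmp R n).

Lemma arcs_cat_cons (s : seq 'I_n) y t : arcs (s ++ y :: t) = arcs (rcons s y) ++ arcs (y :: t).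
Proof. by elim: s => [//|x [|z s] IH] //=; rewrite /arcs /= in IH *; rewrite IH. Qed.

Lemma wweight_cat_cons s y t :
  wweight A (s ++ y :: t) = (wweight A (rcons s y) + wweight A (y :: t))%R.
Proof. by rewrite /wweight arcs_cat_cons big_cat. Qed.

Lemma is_walk_cat_cons s y t :
  is_walk A (s ++ y :: t) <-> is_walk A (rcons s y) /\ is_walk A (y :: t).
Proof.
rewrite /is_walk arcs_cat_cons; split.
  move=> [_ ok]; split; split; first by case: s {ok}.
  - by move=> e es; apply: ok; rewrite mem_cat es.
  - by [].
  - by move=> e et; apply: ok; rewrite mem_cat et orbT.
move=> [[_ ok1] [_ ok2]]; split; first by case: s {ok1}.
by move=> e; rewrite mem_cat => /orP [] ?; [apply: ok1|apply: ok2].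
Qed.

Lemma walk_from_to_cons x w u v :
  walk_from_to A (x :: w) u v <-> [/\ is_walk A (x :: w), x = u & last x w = v].
Proof.
rewrite /walk_from_to /wlen /= (onth_nth_size x) //= -[in nth _ _ _]/(size (x :: w)).-1.
by rewrite nth_last; split => [[walk [[<-] [<-]]]|[walk <- <-]].
Qed.

Lemma uniq_closed_walk_is_cycle x l :
  is_walk A (x :: rcons l x) -> uniq (x :: l) -> is_cycle A (x :: rcons l x).
Proof.
move=> walk uniq_xl; have size_c : size (x :: rcons l x) = (size l).+2 by rewrite /= size_rcons.
rewrite /is_cycle /wlen size_c /=; split; first exact: walk.
split; first by [].
split; first by rewrite (onth_nth_size x) ?size_rcons // nth_rcons ltnn eqxx.
move=> a b /andP [ab bl] ne.
have al : a < (size l).+1 by apply: leq_trans ab bl.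
rewrite (onth_nth_size x) ?size_c ?ltnS ?(ltnW al) // (onth_nth_size x) ?size_c ?ltnS //.
move=> [] Eab; move: bl; rewrite leq_eqVlt => /orP [/eqP bE|bl].
  subst b; case: a ab al ne Eab => [|a] ab al ne Eab; first by apply: ne.
  move: Eab; rewrite /= !nth_rcons ltnn eqxx -ltnS al => Eab.
  by move: uniq_xl => /= /andP [/negP []]; rewrite -Eab mem_nth.
have : nth x (x :: l) a = nth x (x :: l) b.
  by move: Eab; rewrite -!rcons_cons !nth_rcons /= ltnS -ltnS al bl.
by move/eqP; rewrite (nth_uniq x) //= ?al ?bl // => /eqP abE; rewrite abE ltnn in ab.
Qed.

Hypothesis lambda0 : max_cycle_mean A 0.

Lemma cycle_weight_le0 c : is_cycle A c -> (wweight A c <= 0)%R.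
Proof.
move=> cyc; have := lambda0.2 c cyc; rewrite /cmean.
have m0 : (0 < (wlen c)%:R :> R)%R by rewrite ltr0n; case: cyc => _ [].
by rewrite pmulr_lle0 ?invr_gt0.
Qed.

Lemma closed_walk_weight_le0 x l :
  is_walk A (x :: rcons l x) -> (wweight A (x :: rcons l x) <= 0)%R.
Proof.
elim: {l}(size l).+1 {-2}l x (ltnSn (size l)) => [//|k IH] l x lk walk.
have [uniq_xl|/not_uniq_split [s1 [y [s2 [s3 El]]]]] := boolP (uniq (x :: l)).
  exact/cycle_weight_le0/uniq_closed_walk_is_cycle.
have /eqP : size (x :: l) = size (s1 ++ y :: s2 ++ y :: s3) by rewrite El.
rewrite /= size_cat /= size_cat /= !addnS eqSS => /eqP size_l; rewrite ltnS in lk.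
have Ex : x :: rcons l x = s1 ++ y :: s2 ++ y :: rcons s3 x.
  by rewrite -rcons_cons El rcons_cat /= rcons_cat.
rewrite Ex in walk *.
have [W1 /(is_walk_cat_cons (y :: s2)) [W2 W3]] := (is_walk_cat_cons _ _ _).1 walk.
have loop_le0 : (wweight A (y :: rcons s2 y) <= 0)%R.
  apply: IH; last by rewrite -rcons_cons.
  by apply: leq_trans _ lk; rewrite size_l ltnS addnCA leq_addr.
have rest_le0 : (wweight A (s1 ++ y :: rcons s3 x) <= 0)%R.
  case: s1 El size_l W1 W3 {Ex walk} => [|x' s1] [<-] El size_l W1 W3.
    by apply: IH W3; apply: leq_trans _ lk; rewrite size_l ltnS leq_addl.
  have -> : (x :: s1) ++ y :: rcons s3 x = x :: rcons (s1 ++ y :: s3) x by rewrite rcons_cat.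
  apply: IH; last by rewrite rcons_cat -cat_cons; apply/is_walk_cat_cons.
  by apply: leq_trans _ lk; rewrite size_l size_cat /= ltnS addnS addSn ltnS leq_add2l leq_addl.
move: rest_le0; rewrite !wweight_cat_cons (wweight_cat_cons (y :: s2)) -rcons_cons; lra.
Qed.

Definition shortcut (W V : seq 'I_n) : Prop :=
  (forall u v, walk_from_to A W u v -> walk_from_to A V u v) /\
  (is_walk A W -> (wweight A W <= wweight A V)%R).

Lemma shortcut_refl W : shortcut W W.
Proof. by []. Qed.

Lemma shortcut_trans W V U : shortcut W V -> shortcut V U -> shortcut W U.
Proof.
move=> [WV wWV] [VU wVU]; split=> [u v /WV /VU //|Ww].
case: W Ww WV wWV => [[//]|x w] Ww WV wWV.
have [Vw _] := WV x (last x w) ((walk_from_to_cons _ _ _ _).2 (And3 Ww erefl erefl)).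
by apply: le_trans (wWV Ww) (wVU Vw).
Qed.

Lemma shortcut_cut_loop a x l b : shortcut (a ++ x :: l ++ x :: b) (a ++ x :: b).
Proof.
have cut_walk : is_walk A (a ++ x :: l ++ x :: b) ->
    [/\ is_walk A (rcons a x), is_walk A (x :: rcons l x) & is_walk A (x :: b)].
  by case/is_walk_cat_cons=> Wa /(is_walk_cat_cons (x :: l)) [Wl Wb].
split=> [u v|/cut_walk [Wa Wl Wb]]; last first.
  rewrite wweight_cat_cons (wweight_cat_cons (x :: l)) wweight_cat_cons.
  have := closed_walk_weight_le0 Wl; lra.
case: a cut_walk => [|z a] cut_walk; rewrite /= !walk_from_to_cons.
  by case=> /cut_walk [_ _ Wb] xu; rewrite last_cat /= => <-.
case=> /cut_walk [Wa _ Wb] zu; rewrite !last_cat /= last_cat /= => <-.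
by split=> //; exact: (is_walk_cat_cons (z :: a) x b).2.
Qed.

Lemma shortcut_drop_loops y segs pre post m : all (return_loop y) segs ->
  shortcut (pre ++ y :: flatten segs ++ post) (pre ++ y :: flatten (mask m segs) ++ post).
Proof.
elim: segs pre m => [|s segs IH] pre m /=; first by rewrite mask0.
case/andP=> /return_loopP [l -> _] loops.
have cut m' := shortcut_trans (shortcut_cut_loop pre y l (flatten segs ++ post)) (IH pre m' loops).
rewrite -catA cat_rcons.
case: m => [|[] m] /=; [exact: cut [::] | | exact: cut m].
by have := IH (pre ++ y :: l) m loops; rewrite -!catA /= cat_rcons.
Qed.

End Walks.

Lemma mask_block {T : Type} (c : seq T) t k : t + k <= size c ->
  mask (nseq t false ++ nseq k true ++ nseq (size c - (t + k)) false) c = take k (drop t c).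
Proof.
move=> tkc; rewrite -[c in mask _ c](cat_take_drop t) mask_cat ?size_nseq ?size_takel //;
  last by lia.
rewrite mask_false /= -[drop t c](cat_take_drop k) mask_cat ?size_nseq ?size_takel ?size_drop //;
  last by lia.
by rewrite (@mask_true _ (take k _)) ?mask_false ?cats0 ?cat_take_drop // size_take_min geq_minl.
Qed.

Lemma mask_sumn_mod0 g (c : seq nat) : 0 < g -> g <= size c ->
  exists m : bitseq, [/\ size m = size c, has id m & sumn (mask m c) %% g = 0].
Proof.
move=> g0 gc.
(* Two of the g + 1 prefix sums of c agree modulo g; keep the block between them. *)
pose residue (t : 'I_g.+1) : 'I_g := Ordinal (ltn_pmod (sumn (take t c)) g0).
have /injectivePn [t1 [t2 ne12 Eres]] : ~~ injectiveb residue.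
  by apply/injectiveP => /leq_card; rewrite !card_ord ltnn.
wlog lt12 : t1 t2 ne12 Eres / t1 < t2.
  move=> gen; case: (ltngtP t1 t2) => [|lt21|/val_inj E12]; first exact: gen.
    by apply: (gen t2 t1); rewrite // eq_sym.
  by rewrite E12 eqxx in ne12.
have t2c : t2 <= size c by apply: leq_trans gc; rewrite -ltnS.
exists (nseq t1 false ++ nseq (t2 - t1) true ++ nseq (size c - (t1 + (t2 - t1))) false); split.
- by rewrite !size_cat !size_nseq; lia.
- by rewrite !has_cat !has_nseq /= subn_gt0 lt12 andbF orbT.
rewrite mask_block; last by lia.
move: Eres => [] /eqP; rewrite -(subnKC (ltnW lt12)) takeD sumn_cat addKn.
by rewrite -[X in X %% g == _]addn0 eqn_modDl mod0n eq_sym => /eqP.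
Qed.

Lemma mask_sumn_mod0_avoid g (c : seq nat) t : 0 < g -> t < size c -> g < size c ->
  exists m : bitseq,
    [/\ size m = size c, ~~ nth false m t, has id m & sumn (mask m c) %% g = 0].
Proof.
move=> g0 tc gc.
have [|m [sm hm Em]] := @mask_sumn_mod0 g (take t c ++ drop t.+1 c) g0.
  by rewrite size_cat size_take size_drop tc; lia.
have {}sm : size m = (size c).-1 by rewrite sm size_cat size_takel ?size_drop; lia.
have tm : t <= size m by rewrite sm; lia.
exists (take t m ++ false :: drop t m); split.
- by rewrite size_cat /= size_takel // size_drop sm; lia.
- by rewrite nth_cat size_takel // ltnn subnn.
- by move: hm; rewrite -{1}(cat_take_drop t m) !has_cat /= => /orP [] ->; rewrite ?orbT.
rewrite -(cat_take_drop t c) (drop_nth 0 tc) mask_cat ?size_takel ?(ltnW tc) //=.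
by rewrite -mask_cat ?size_takel ?(ltnW tc) // cat_take_drop.
Qed.

Lemma mask_sumn_mod0_extra g (c : seq nat) t e : 0 < g -> t < size c -> g <= size c ->
  exists (b : bool) (m : bitseq), [/\ size m = size c, ~~ nth false m t, b || has id m &
    ((if b then e else 0) + sumn (mask m c)) %% g = 0].
Proof.
move=> g0 tc gc.
have [[|b m] [//= [sm] mt hm Em]] := @mask_sumn_mod0_avoid g (e :: c) t.+1 g0 tc gc.
by exists b, m; case: b Em hm.
Qed.

Section TwiceOptimal.
Variables (R : realFieldType) (n : nat) (A : mxmp R n) (Z0 : seq 'I_n) (g : nat) (W : seq 'I_n).
Hypotheses (lambda0 : max_cycle_mean A 0) (g_gt0 : 0 < g) (W_opt : twice_optimal A Z0 g W).

Lemma twice_optimal_shortcut V k : shortcut A W V -> through Z0 V ->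
  size V + k = size W -> k %% g = 0 -> k = 0.
Proof.
case: W_opt => u [v [Wuv [_ [W_max W_min]]]] [WV wWV] thV VkW kg.
have Vuv := WV u v Wuv; have [[V0 _] _] := Vuv.
have wlenV : wlen W = wlen V + k by rewrite /wlen -VkW; case: (V) V0.
have modV : wlen V = wlen W %[mod g] by rewrite wlenV -modnDmr kg addn0.
have Veq : wweight A V = wweight A W.
  by apply: le_anti; rewrite W_max //= (wWV Wuv.1).
by have := W_min V Vuv thV modV Veq; rewrite wlenV -{2}[wlen V]addn0 leq_add2l leqn0 => /eqP.
Qed.

Lemma shortcut_drop_loops_not_through V pre y segs post e m :
  shortcut A W V -> V = pre ++ y :: flatten segs ++ post -> all (return_loop y) segs ->
  size W = size V + e -> size m = size segs ->
  0 < e + sumn (mask m (shape segs)) -> (e + sumn (mask m (shape segs))) %% g = 0 ->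
  ~~ through Z0 (pre ++ y :: flatten (mask (map negb m) segs) ++ post).
Proof.
move=> WV EV loops WVe sm pos mod0; apply/negP => th.
have WV' : shortcut A W (pre ++ y :: flatten (mask (map negb m) segs) ++ post).
  by apply: shortcut_trans WV _; rewrite EV; exact: shortcut_drop_loops.
suff /(twice_optimal_shortcut WV' th) E0 :
    size (pre ++ y :: flatten (mask (map negb m) segs) ++ post)
    + (e + sumn (mask m (shape segs))) = size W by rewrite E0 in pos.
rewrite WVe EV !size_cat /= !size_cat !size_flatten -(sumn_shape_mask_negb sm) /shape !map_mask.
lia.
Qed.

Section ReturnDecomposition.
Variables (pre post : seq 'I_n) (y : 'I_n) (segs : seq (seq 'I_n)).
Hypotheses (W_split : W = pre ++ y :: flatten segs ++ post) (loops : all (return_loop y) segs).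

Lemma drop_loops_not_through m :
  size m = size segs -> has id m -> sumn (mask m (shape segs)) %% g = 0 ->
  ~~ through Z0 (pre ++ y :: flatten (mask (map negb m) segs) ++ post).
Proof.
move=> sm hm mod0.
apply: (shortcut_drop_loops_not_through (shortcut_refl A W) W_split loops (esym (addn0 _)) sm);
  rewrite //.
by rewrite add0n; apply: (sumn_mask_shape_gt0 loops).
Qed.

Lemma return_loops_lt_girth : through Z0 (pre ++ y :: post) -> size segs < g.
Proof.
move=> th; rewrite ltnNge; apply/negP => gs.
have [|m [sm hm mod0]] := mask_sumn_mod0 g_gt0 (c := shape segs); first by rewrite size_map.
rewrite size_map in sm; move/negP: (drop_loops_not_through sm hm mod0); apply.
by move: th; rewrite /through !has_cat /= has_cat => /or3P [] ->; rewrite ?orbT.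
Qed.

Lemma return_loops_le_girth : size segs <= g.
Proof.
rewrite leqNgt; apply/negP => gs.
have [_ [_ [_ [thW _]]]] := W_opt.
have [z + zZ] := hasP thW; rewrite W_split mem_cat inE mem_cat => /or4P zW.
have [/flattenP [s sl zs]|zout] := boolP (z \in flatten segs).
  have tl : index s segs < size (shape segs) by rewrite size_map index_mem.
  have gl : g < size (shape segs) by rewrite size_map.
  have [m [sm mt hm mod0]] := mask_sumn_mod0_avoid g_gt0 tl gl.
  rewrite size_map in sm.
  move/negP: (drop_loops_not_through sm hm mod0); apply.
  apply/hasP; exists z => //.
  rewrite mem_cat inE mem_cat (mem_flatten_mask (t := index s segs)) ?orbT //.
    by rewrite (nth_map false) ?sm ?index_mem.
  by rewrite nth_index.
suff : size segs < g by rewrite ltnNge ltnW.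
apply: return_loops_lt_girth; apply/hasP; exists z => //.
rewrite mem_cat inE; case: zW => [->|/eqP ->|zl|->]; rewrite ?eqxx ?orbT //.
by rewrite zl in zout.
Qed.

Lemma return_loop_count_le1 i t : g <= size segs -> i \in Z0 -> i != y ->
  t < size segs -> count_mem i (nth [::] segs t) <= 1.
Proof.
move=> gs iZ iy ts; rewrite leqNgt; apply/negP => c2.
(* The closed subwalk between two occurrences of i in the t-th loop is one more
   removable piece, disjoint from the other loops. *)
have /return_loopP [l El yl] : return_loop y (nth [::] segs t).
  by apply: (allP loops); rewrite mem_nth.
have [a [b [c El']]] : exists a b c : seq 'I_n, l = a ++ i :: b ++ i :: c.
  apply: count_mem_gt1_split.
  by move: c2; rewrite El -cats1 count_cat /= eq_sym (negbTE iy) !addn0.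
set s' := rcons (a ++ i :: c) y; set segs1 := set_nth [::] segs t s'.
set P := pre ++ y :: flatten (take t segs) ++ a.
set Q := rcons c y ++ flatten (drop t.+1 segs) ++ post.
have EW : W = P ++ i :: b ++ i :: Q.
  rewrite W_split -(cat_take_drop t segs) (drop_nth [::] ts) El El'.
  by rewrite /P /Q flatten_cat /= !cat_rcons -!catA /= -!catA.
have EW1 : pre ++ y :: flatten segs1 ++ post = P ++ i :: Q.
  by rewrite /segs1 set_nthE ts /P /Q /s' flatten_cat /= !cat_rcons -!catA /= -!catA.
have WW1 : shortcut A W (pre ++ y :: flatten segs1 ++ post).
  by rewrite EW EW1; exact: shortcut_cut_loop.
have sizeW1 : size W = size (pre ++ y :: flatten segs1 ++ post) + (size b).+1.
  by rewrite EW EW1 size_cut_loop.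
have size1 : size segs1 = size segs by rewrite size_set_nth; apply/maxn_idPr.
have loops1 : all (return_loop y) segs1.
  apply/allP=> s; rewrite /segs1 set_nthE ts mem_cat inE => /or3P [st|/eqP ->|sd].
  - exact/(allP loops)/(mem_take st).
  - apply/return_loopP; exists (a ++ i :: c) => //; apply: contra yl.
    by rewrite El' !(mem_cat, inE) => /or3P [->|->|->]; rewrite ?orbT.
  - exact/(allP loops)/(mem_drop sd).
have ts' : t < size (shape segs) by rewrite size_map.
have gs' : g <= size (shape segs) by rewrite size_map.
have [bb [m [sm mt hm mod0]]] := mask_sumn_mod0_extra (size b).+1 g_gt0 ts' gs'.
rewrite size_map in sm.
have mask1 : mask m (shape segs1) = mask m (shape segs).
  by rewrite /shape -!map_mask mask_set_nth.
have kept bsegs : i \in nth [::] bsegs t ->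
    through Z0 (pre ++ y :: flatten (mask (map negb m) bsegs) ++ post).
  move=> ib; apply/hasP; exists i => //.
  rewrite mem_cat inE mem_cat (mem_flatten_mask _ ib) ?orbT //.
  by rewrite (nth_map false) ?sm.
have sm1 : size m = size segs1 by rewrite sm size1.
case: bb hm mod0 => [_|/= hm] mod0.
  rewrite -mask1 in mod0; have pos : 0 < (size b).+1 + sumn (mask m (shape segs1)) by rewrite addSn.
  move/negP: (shortcut_drop_loops_not_through WW1 erefl loops1 sizeW1 sm1 pos mod0); apply.
  by apply: kept; rewrite // /segs1 nth_set_nth /= eqxx /s' mem_rcons !(mem_cat, inE) eqxx !orbT.
have pos : 0 < 0 + sumn (mask m (shape segs)) by rewrite add0n (sumn_mask_shape_gt0 loops).
move/negP: (shortcut_drop_loops_not_through (shortcut_refl A W) W_split loops (esym (addn0 _))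
  sm pos mod0).
by apply; apply: kept; rewrite // El El' mem_rcons !(mem_cat, inE) eqxx !orbT.
Qed.

End ReturnDecomposition.

Lemma count_mem_le_girth y : count_mem y W <= (if y \in Z0 then g else g.+1).
Proof.
have [yW|yW] := boolP (y \in W); last by rewrite (count_memPn yW).
have [pre [segs [post [EW ypre ypost loops]]]] := return_decomposition yW.
rewrite EW count_return_decomposition //.
case: ifP => yZ; last exact: return_loops_le_girth EW loops.
by apply: (return_loops_lt_girth EW loops); apply/hasP; exists y; rewrite ?mem_cat ?inE ?eqxx ?orbT.
Qed.

Lemma alternate_of_counts i j : i \in Z0 -> j \notin Z0 ->
  count_mem i W = g -> count_mem j W = g.+1 -> alternate j i W.
Proof.
move=> iZ jZ ci cj; have ij : i != j by apply: contraNneq jZ => <-.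
have /return_decomposition [pre [segs [post [EW jpre jpost loops]]]] : j \in W.
  by rewrite -has_pred1 has_count cj.
have size_segs : size segs = g by move: cj; rewrite EW count_return_decomposition // => -[].
have i_in_loops : i \notin pre ++ j :: post -> i \notin pre /\ i \notin post.
  by rewrite mem_cat inE negb_or (negbTE ij) /= => /andP [-> ->].
have [ipre ipost] : i \notin pre /\ i \notin post.
  apply: i_in_loops; apply/negP => iout.
  suff : g < g by rewrite ltnn.
  by rewrite -{1}size_segs; apply: (return_loops_lt_girth EW loops); apply/hasP; exists i.
have le1 : {in map (count_mem i) segs, forall x, x <= 1}.
  move=> _ /mapP [s sl ->]; rewrite -(nth_index [::] sl).
  by apply: (return_loop_count_le1 EW loops) => //; [rewrite size_segs | rewrite index_mem].
have count_loops : sumn (map (count_mem i) segs) = size segs.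
  move: ci; rewrite EW size_segs count_cat (count_memPn ipre) /= eq_sym (negbTE ij) count_cat.
  by rewrite (count_memPn ipost) addn0 count_flatten.
have ji : j != i by rewrite eq_sym.
rewrite EW; apply: (alternate_return_decomposition ji) => //; apply/allP => s sl.
rewrite (allP loops s sl) /=.
have := (leqif_sumn_size le1).2; rewrite count_loops size_map eqxx => /esym/allP.
by apply; apply: map_f.
Qed.

End TwiceOptimal.

Lemma sum_count_mem (T : finType) (s : seq T) : \sum_(x : T) count_mem x s = size s.
Proof.
elim: s => [|y s IH] /=; first by rewrite big1.
rewrite big_split /= IH (bigD1 y) //= eqxx big1 ?addn0 // => x /negbTE.
by rewrite eq_sym => ->.
Qed.

Lemma is_cycle_card (R : realFieldType) (n : nat) (A : mxmp R n) c :
  is_cycle A c -> #|[pred x in c]| = wlen c.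
Proof.
case: c => [[[//]]|z c] [_ [c_gt0 [closed simple]]].
have uc : uniq c.
  apply/(uniqP z) => a b ac bc Eab; apply/eqP; apply/negP => ne.
  wlog lt : a b ac bc Eab ne / a < b.
    move=> gen; case: (ltngtP a b) => [|ba|ab]; first exact: gen.
      by apply: (gen b a); rewrite // eq_sym.
    by rewrite ab eqxx in ne.
  apply: (simple a.+1 b.+1); first by rewrite ltnS lt /wlen /=.
    by case.
  by rewrite /= (onth_nth_size z ac) (onth_nth_size z bc) Eab.
have zc : z \in c.
  move: closed c_gt0; rewrite /wlen /=; case: c {uc simple} => [//|x c] /=.
  by rewrite (onth_nth_size x) // => -[->] _; rewrite mem_nth.
rewrite /wlen /= -(card_uniqP uc); apply: eq_card => y.
by rewrite !inE; case: eqVneq => [->|].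
Qed.

Lemma interesting_count_mem (R : realFieldType) (n : nat) (A : mxmp R n) Z0 g W :
  1 < n -> max_cycle_mean A 0 -> is_cycle A Z0 -> wlen Z0 = g -> interesting A Z0 g W ->
  forall y, count_mem y W = if y \in Z0 then g else g.+1.
Proof.
move=> n_gt1 lambda0 Zcyc Zlen [W_opt W_len].
have g_gt0 : 0 < g by rewrite -Zlen; case: Zcyc => _ [].
(* |W| = DM g n + g = n (g + 1) - g is the sum of the bounds of
   count_mem_le_girth, so every bound is attained. *)
have sizeW : size W = n * g.+1 - g.
  have [u [v [[[W0 _] _] _]]] := W_opt.
  move: W_len; rewrite /wlen /DM; case: (W) W0 => //= _ w _ ->.
  by rewrite -(subnK n_gt1) addnK mulnS; lia.
have sum_bound : \sum_(y < n) (if y \in Z0 then g else g.+1) = size W.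
  have cardZ : \sum_(y < n) (y \in Z0 : nat) = g.
    rewrite -Zlen -(is_cycle_card Zcyc) -sum1_card [RHS]big_mkcond.
    by apply: eq_bigr => y _; rewrite inE; case: (y \in Z0).
  have split_bound : \sum_(y < n) (if y \in Z0 then g else g.+1) + \sum_(y < n) (y \in Z0 : nat)
      = n * g.+1.
    rewrite -big_split /= (eq_bigr (fun=> g.+1)) ?sum_nat_const ?card_ord //.
    by move=> y _; case: (y \in Z0); rewrite ?addn0 ?addn1.
  apply/eqP; rewrite sizeW -(eqn_add2r g) subnK; first by rewrite -split_bound cardZ.
  by rewrite mulnSr (leq_trans _ (leq_addr _ _)) // leq_pmull // ltnW.
have := leqif_sum (fun y (_ : true) => leqif_eq (count_mem_le_girth lambda0 g_gt0 W_opt y)).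
rewrite sum_count_mem sum_bound => -[_]; rewrite eqxx => /esym/forallP all_eq y.
exact/eqP/all_eq.
Qed.

Theorem lemmal (R : realFieldType) (n : nat) (A : mxmp R n) (g : nat)
  (Z0 : seq 'I_n) (i j : 'I_n) (W : seq 'I_n) :
  max_cycle_mean A 0%R ->
  crit_girth A g ->
  T1_is A (DM g n) ->
  unique_crit_cycle A g Z0 ->
  i \in Z0 -> j \notin Z0 ->
  interesting A Z0 g W ->
  (forall p q : nat, (p < q < size W)%N ->
     onth W p = Some i -> onth W q = Some i ->
     (forall r : nat, (p < r < q)%N -> onth W r <> Some i) ->
     count_mem j (drop p.+1 (take q W)) = 1%N) /\
  (i \in W ->
     count_mem j (take (index i W) W) = 1%N /\
     count_mem j (take (index i (rev W)) (rev W)) = 1%N).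
Proof.
move=> lambda0 _ _ [[Zcyc _] [Zlen _]] iZ jZ Wint.
have ji : j != i by apply: contraNneq jZ => ->.
have n_gt1 : 1 < n.
  rewrite ltnNge; apply: contra ji => n_le1; apply/eqP/ord_inj.
  by have := ltn_ord i; have := ltn_ord j; lia.
have counts := interesting_count_mem n_gt1 lambda0 Zcyc Zlen Wint.
have g_gt0 : 0 < g by rewrite -Zlen; case: Zcyc => _ [].
have alt : alternate j i W.
  by apply: (alternate_of_counts lambda0 g_gt0 Wint.1 iZ jZ); rewrite counts ?iZ ?(negbTE jZ).
split=> [p q pqW Wp Wq between|iW].
  have [qW pW] : q < size W /\ p < size W by case/andP: pqW => pq qW; split; [|apply: ltn_trans qW].
  apply: (alternate_between ji (x0 := i) alt pqW).
  - by move: Wp; rewrite (onth_nth_size i pW) => -[].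
  - by move: Wq; rewrite (onth_nth_size i qW) => -[].
  move=> r prq; apply/eqP => Wr; apply: (between r prq).
  by rewrite (onth_nth_size i) ?Wr //; case/andP: prq => _ /ltn_trans; apply.
split; first exact: alternate_before_first.
by apply: alternate_after_last; rewrite // !counts iZ (negbTE jZ).
Qed.
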